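(* Let $(X,\rho)$ be a complete locally compact $\mathbb R$-tree and let $\mathcal B$ be the family of subsets of $\mathcal O_+(X)$ described below. For any $\mathcal U_1,\mathcal U_2\in\mathcal B$ and any order $\tau\in\mathcal U_1\cap\mathcal U_2$ there exists $\mathcal U\in\mathcal B$ with $\tau\in\mathcal U\subset\mathcal U_1\cap\mathcal U_2$.
   Context: An $\mathbb R$-tree is a geodesic metric space in which any two points are joined by a unique segment and $[xy]\subset[xz]\cup[zy]$ for all $x,y,z$. $\mathcal O_+(X)$ is the set of partial orders $\tau$ on $X$ such that any two points have a supremum $x\vee y$, $x\,\tau\, z\,\tau\, y$ implies $\rho(x,z)+\rho(z,y)=\rho(x,y)$, $\rho(x,y)=\rho(x,x\vee y)+\rho(x\vee y,y)$ for all $x,y$, and every upper cone $\{y: x\,\tau\, y\}$ is linearly ordered. $\mathcal O_+^r(X)$ consists of those having a greatest element (root); for $y\in X$, $\preceq_{(y)}$ is the order with root $y$ ($s\preceq_{(y)}t$ iff $t\in[ys]$). $\mathcal O_+^r(X)$ carries the Hausdorff metric $\operatorname{Hd}$ of orders viewed as subsets of $X\times X$ with metric $d_+((x_1,x_2),(y_1,y_2))=\rho(x_1,y_1)+\rho(x_2,y_2)$. $\mathcal B$ consists of all open subsets of $(\mathcal O_+^r(X),\operatorname{Hd})$ together with all sets $\mathcal U_{(x,y)}=\{\tau\in\mathcal O_+(X): x\,\tau\, y\}\setminus\{\preceq_{(y)}\}$ for $x\ne y$ in $X$. *)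

From Stdlib Require Import Reals List.
Open Scope R_scope.

Section Defs.
Context {X : Type}.
Variable rho : X -> X -> R.

Definition is_metric : Prop :=
  (forall x y, 0 <= rho x y) /\
  (forall x y, rho x y = 0 <-> x = y) /\
  (forall x y, rho x y = rho y x) /\
  (forall x y z, rho x z <= rho x y + rho y z).

Definition ball (x : X) (r : R) : X -> Prop := fun y => rho x y < r.

Definition open_set (U : X -> Prop) : Prop :=
  forall x, U x -> exists r, 0 < r /\ forall y, ball x r y -> U y.

Definition compact (K : X -> Prop) : Prop :=
  forall F : (X -> Prop) -> Prop,
    (forall U, F U -> open_set U) ->
    (forall x, K x -> exists U, F U /\ U x) ->
    exists l : list (X -> Prop),
      (forall U, In U l -> F U) /\
      (forall x, K x -> exists U, In U l /\ U x).

Definition locally_compact : Prop :=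
  forall x, exists K, compact K /\ exists r, 0 < r /\ forall y, ball x r y -> K y.

Definition cauchy (u : nat -> X) : Prop :=
  forall eps, 0 < eps -> exists N, forall m n, (N <= m)%nat -> (N <= n)%nat ->
    rho (u m) (u n) < eps.

Definition complete : Prop :=
  forall u, cauchy u -> exists l, forall eps, 0 < eps ->
    exists N, forall n, (N <= n)%nat -> rho (u n) l < eps.

Definition is_geodesic (x y : X) (g : R -> X) : Prop :=
  g 0 = x /\ g (rho x y) = y /\
  forall s t, 0 <= s <= rho x y -> 0 <= t <= rho x y ->
    rho (g s) (g t) = Rabs (s - t).

Definition image_seg (x y : X) (g : R -> X) : X -> Prop :=
  fun z => exists t, 0 <= t <= rho x y /\ g t = z.

(** [x y] : the union of images of geodesic segments from x to y
    (in an R-tree there is exactly one). *)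
Definition seg (x y : X) : X -> Prop :=
  fun z => exists g, is_geodesic x y g /\ image_seg x y g z.

Definition is_Rtree : Prop :=
  (forall x y, exists g, is_geodesic x y g) /\
  (forall x y g1 g2, is_geodesic x y g1 -> is_geodesic x y g2 ->
     forall z, image_seg x y g1 z <-> image_seg x y g2 z) /\
  (forall x y z w, seg x y w -> seg x z w \/ seg z y w).

(** Orders on X are relations; [tau s t] reads "s tau t" (s below t). *)
Definition order := X -> X -> Prop.

Definition is_partial_order (tau : order) : Prop :=
  (forall x, tau x x) /\
  (forall x y, tau x y -> tau y x -> x = y) /\
  (forall x y z, tau x y -> tau y z -> tau x z).

Definition is_sup (tau : order) (x y s : X) : Prop :=
  tau x s /\ tau y s /\ forall u, tau x u -> tau y u -> tau s u.

Definition in_Oplus (tau : order) : Prop :=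
  is_partial_order tau /\
  (forall x y, exists s, is_sup tau x y s) /\
  (forall x z y, tau x z -> tau z y -> rho x z + rho z y = rho x y) /\
  (forall x y s, is_sup tau x y s -> rho x y = rho x s + rho s y) /\
  (forall x y z, tau x y -> tau x z -> tau y z \/ tau z y).

Definition in_Oplus_r (tau : order) : Prop :=
  in_Oplus tau /\ exists r, forall x, tau x r.

Definition root_order (y : X) : order := fun s t => seg y s t.

Definition same_order (tau sigma : order) : Prop :=
  forall s t, tau s t <-> sigma s t.

(** Hd(tau, sigma) < eps, for the Hausdorff distance of tau, sigma viewed as
    subsets of X x X with d_+((x1,x2),(y1,y2)) = rho x1 y1 + rho x2 y2;
    i.e. there is delta < eps with sup_{a in tau} inf_{b in sigma} d_+(a,b) <= delta
    and symmetrically. *)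
Definition Hd_lt (tau sigma : order) (eps : R) : Prop :=
  exists delta, delta < eps /\
    (forall a1 a2, tau a1 a2 -> forall eta, 0 < eta ->
       exists b1 b2, sigma b1 b2 /\ rho a1 b1 + rho a2 b2 < delta + eta) /\
    (forall b1 b2, sigma b1 b2 -> forall eta, 0 < eta ->
       exists a1 a2, tau a1 a2 /\ rho a1 b1 + rho a2 b2 < delta + eta).

Definition Hd_open (U : order -> Prop) : Prop :=
  (forall tau, U tau -> in_Oplus_r tau) /\
  (forall tau, U tau -> exists eps, 0 < eps /\
     forall sigma, in_Oplus_r sigma -> Hd_lt tau sigma eps -> U sigma).

Definition U_xy (x y : X) : order -> Prop :=
  fun tau => in_Oplus tau /\ tau x y /\ ~ same_order tau (root_order y).

Definition in_B (U : order -> Prop) : Prop :=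
  Hd_open U \/
  exists x y, x <> y /\ forall tau, U tau <-> U_xy x y tau.

End Defs.
Arguments order : clear implicits.

(* If tau has a root r, every member of B is an Hd-neighbourhood of tau.  For
   U_(x,y) this holds with radius rho y r: the root r' of an order sigma that
   is Hd-close to tau is pinned down by the Gromov-product ultrametric
   inequality of sigma, forcing x sigma y and r' <> y.  So the rooted orders of
   U1 /\ U2 form an Hd-open set.  If tau has no root, it lies in no Hd-open
   set, so U1 = U_(x1,y1) and U2 = U_(x2,y2).  Take w = y1 \/ y2 and v = w \/ z
   for some z not below w; any sigma with w sigma v already orders the whole
   tau-chain below w as tau does, hence U_(w,v) is contained in U1 /\ U2. *)

From Stdlib Require Import Reals Lra Classical.
Open Scope R_scope.

Section RtreeOrders.

Variable X : Type.
Variable rho : X -> X -> R.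
Hypothesis Hmetric : is_metric rho.

Lemma dist_ge0 x y : 0 <= rho x y.
Proof. exact (proj1 Hmetric x y). Qed.

Lemma dist_eq0 x y : rho x y = 0 -> x = y.
Proof. exact (proj1 (proj1 (proj2 Hmetric) x y)). Qed.

Lemma dist_xx x : rho x x = 0.
Proof. exact (proj2 (proj1 (proj2 Hmetric) x x) eq_refl). Qed.

Lemma dist_sym x y : rho x y = rho y x.
Proof. exact (proj1 (proj2 (proj2 Hmetric)) x y). Qed.

Lemma dist_triangle x y z : rho x z <= rho x y + rho y z.
Proof. exact (proj2 (proj2 (proj2 Hmetric)) x y z). Qed.

Section Oplus.

Variable s : order X.
Hypothesis Hs : in_Oplus rho s.

Lemma Oplus_antisym x y : s x y -> s y x -> x = y.
Proof. exact (proj1 (proj2 (proj1 Hs)) x y). Qed.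

Lemma Oplus_trans x y z : s x y -> s y z -> s x z.
Proof. exact (proj2 (proj2 (proj1 Hs)) x y z). Qed.

Lemma Oplus_sup x y : exists m, is_sup s x y m.
Proof. exact (proj1 (proj2 Hs) x y). Qed.

Lemma Oplus_chain_dist x z y : s x z -> s z y -> rho x z + rho z y = rho x y.
Proof. exact (proj1 (proj2 (proj2 Hs)) x z y). Qed.

Lemma Oplus_sup_dist x y m : is_sup s x y m -> rho x y = rho x m + rho m y.
Proof. exact (proj1 (proj2 (proj2 (proj2 Hs))) x y m). Qed.

Lemma Oplus_upper_total x y z : s x y -> s x z -> s y z \/ s z y.
Proof. exact (proj2 (proj2 (proj2 (proj2 Hs))) x y z). Qed.

Lemma Oplus_between a b c : s a c -> s b c -> rho a b + rho b c = rho a c -> s a b.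
Proof.
  intros Hac Hbc Habc.
  destruct (Oplus_sup a b) as [m Hm].
  pose proof (Oplus_sup_dist _ _ _ Hm) as Eab.
  destruct Hm as (Ham & Hbm & Hmin).
  pose proof (Oplus_chain_dist _ _ _ Ham (Hmin c Hac Hbc)).
  pose proof (Oplus_chain_dist _ _ _ Hbm (Hmin c Hac Hbc)).
  pose proof (dist_sym m b). pose proof (dist_ge0 m b).
  assert (Emb : m = b) by (apply dist_eq0; lra).
  subst m. exact Ham.
Qed.

Lemma Oplus_below_of_between p w v :
  s w v -> w <> v -> rho p w + rho w v = rho p v -> s p w.
Proof.
  intros Hwv Hne Hpwv.
  destruct (Oplus_sup p w) as [q Hq].
  pose proof (Oplus_sup_dist _ _ _ Hq).
  destruct Hq as (Hpq & Hwq & _).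
  pose proof (dist_triangle p q v). pose proof (dist_sym q w).
  destruct (Oplus_upper_total w q v Hwq Hwv) as [Hqv | Hvq].
  - pose proof (Oplus_chain_dist _ _ _ Hwq Hqv). pose proof (dist_ge0 q w).
    assert (Eqw : q = w) by (apply dist_eq0; lra).
    subst q. exact Hpq.
  - pose proof (Oplus_chain_dist _ _ _ Hwv Hvq).
    pose proof (dist_sym q v). pose proof (dist_ge0 w v).
    exfalso. apply Hne, dist_eq0. lra.
Qed.

Section Rooted.

Variable r : X.
Hypothesis Hr : forall t, s t r.

(* [rho a r + rho b r - rho a b] is twice the Gromov product of a and b at r. *)
Lemma Oplus_sup_gromov a b m :
  is_sup s a b m -> rho a r + rho b r - rho a b = 2 * rho m r.
Proof.
  intros Hm.
  pose proof (Oplus_sup_dist _ _ _ Hm).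
  destruct Hm as (Ham & Hbm & _).
  pose proof (Oplus_chain_dist _ _ _ Ham (Hr m)).
  pose proof (Oplus_chain_dist _ _ _ Hbm (Hr m)).
  pose proof (dist_sym m b). lra.
Qed.

Lemma Oplus_gromov_ultrametric p q z :
  rho p r + rho q r - rho p q >= rho p r + rho z r - rho p z \/
  rho p r + rho q r - rho p q >= rho z r + rho q r - rho z q.
Proof.
  destruct (Oplus_sup p q) as [m Hm].
  destruct (Oplus_sup p z) as [m1 Hm1].
  destruct (Oplus_sup z q) as [m2 Hm2].
  rewrite (Oplus_sup_gromov _ _ _ Hm), (Oplus_sup_gromov _ _ _ Hm1),
    (Oplus_sup_gromov _ _ _ Hm2).
  destruct Hm as (_ & _ & Hmin). destruct Hm1 as (Hp1 & Hz1 & _).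
  destruct Hm2 as (Hz2 & Hq2 & _).
  destruct (Oplus_upper_total z m1 m2 Hz1 Hz2) as [H12 | H21].
  - right. assert (Hmm2 : s m m2) by (apply Hmin; eauto using Oplus_trans).
    pose proof (Oplus_chain_dist _ _ _ Hmm2 (Hr m2)). pose proof (dist_ge0 m m2). lra.
  - left. assert (Hmm1 : s m m1) by (apply Hmin; eauto using Oplus_trans).
    pose proof (Oplus_chain_dist _ _ _ Hmm1 (Hr m1)). pose proof (dist_ge0 m m1). lra.
Qed.

End Rooted.
End Oplus.

Lemma geodesic_dist a b g t :
  is_geodesic rho a b g -> 0 <= t <= rho a b ->
  rho a (g t) = t /\ rho (g t) b = rho a b - t.
Proof.
  intros (Hg0 & Hg1 & Hg) Ht.
  pose proof (Hg 0 t ltac:(lra) Ht) as E0. rewrite Hg0 in E0.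
  pose proof (Hg t (rho a b) Ht ltac:(lra)) as E1. rewrite Hg1 in E1.
  rewrite E0, E1, Rabs_minus_sym, Rabs_right, Rabs_left1; lra.
Qed.

Lemma seg_between a b w : seg rho a b w -> rho a w + rho w b = rho a b.
Proof.
  intros [g [Hg [t [Ht <-]]]].
  destruct (geodesic_dist _ _ _ _ Hg Ht). lra.
Qed.

Hypothesis Htree : is_Rtree rho.

Lemma between_seg a b w : rho a w + rho w b = rho a b -> seg rho a b w.
Proof.
  intros Hw.
  destruct Htree as (Hgeod & _ & Hsplit).
  destruct (Hgeod a b) as [g Hg].
  pose proof (dist_ge0 a w). pose proof (dist_ge0 w b).
  assert (Ht : 0 <= rho a w <= rho a b) by lra.
  destruct (geodesic_dist _ _ _ _ Hg Ht) as [Eau Eub].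
  assert (Hu : seg rho a b (g (rho a w))) by (exists g; split; [exact Hg | exists (rho a w); auto]).
  enough (Euw : g (rho a w) = w) by (rewrite <- Euw; exact Hu).
  destruct (Hsplit a b w _ Hu) as [Haw%seg_between | Hwb%seg_between].
  - pose proof (dist_sym (g (rho a w)) w). pose proof (dist_ge0 (g (rho a w)) w).
    apply dist_eq0. lra.
  - pose proof (dist_sym (g (rho a w)) w). apply dist_eq0. lra.
Qed.

Lemma seg_left y t : seg rho y t y.
Proof. apply between_seg. rewrite dist_xx. lra. Qed.

Lemma root_order_iff_greatest s y :
  in_Oplus rho s -> (same_order s (root_order rho y) <-> forall z, s z y).
Proof.
  intros Hs. split.
  - intros Hso z. apply Hso, seg_left.
  - intros Hy a b. unfold root_order. split.
    + intros Hab. apply between_seg.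
      pose proof (Oplus_chain_dist _ Hs _ _ _ Hab (Hy b)).
      rewrite (dist_sym y b), (dist_sym b a), (dist_sym y a). lra.
    + intros Hb. apply seg_between in Hb.
      apply (Oplus_between _ Hs a b y (Hy a) (Hy b)).
      rewrite (dist_sym y b), (dist_sym b a), (dist_sym y a) in Hb. lra.
Qed.

Lemma Hd_lt_weaken (tau sigma : order X) e1 e2 :
  e1 <= e2 -> Hd_lt rho tau sigma e1 -> Hd_lt rho tau sigma e2.
Proof. intros He [d [Hd H]]. exists d. split; [lra | exact H]. Qed.

Lemma Hd_lt_root_defect (tau sigma : order X) r' eps a1 a2 :
  in_Oplus rho sigma -> (forall t, sigma t r') -> Hd_lt rho tau sigma eps ->
  tau a1 a2 -> rho a1 a2 + rho a2 r' - rho a1 r' < 2 * eps.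
Proof.
  intros Hs Hr' [delta [Hdelta [Hclose _]]] Ha.
  destruct (Hclose a1 a2 Ha (eps - delta) ltac:(lra)) as [b1 [b2 [Hb Hab]]].
  pose proof (Oplus_chain_dist _ Hs _ _ _ Hb (Hr' b2)).
  pose proof (dist_triangle b1 a1 r'). pose proof (dist_triangle a1 b1 a2).
  pose proof (dist_triangle b1 b2 a2). pose proof (dist_triangle a2 b2 r').
  pose proof (dist_sym b1 a1). pose proof (dist_sym b2 a2).
  pose proof (dist_ge0 a1 b1). pose proof (dist_ge0 a2 b2). lra.
Qed.

Lemma U_xy_Hd_nbhd x y tau :
  in_Oplus_r rho tau -> U_xy rho x y tau ->
  exists eps, 0 < eps /\
    forall sigma, in_Oplus_r rho sigma -> Hd_lt rho tau sigma eps -> U_xy rho x y sigma.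
Proof.
  intros [Htau [r Hr]] (_ & Hxy & Hnroot).
  assert (Hry : r <> y).
  { intros <-. apply Hnroot, (root_order_iff_greatest _ _ Htau), Hr. }
  assert (Hpos : 0 < rho y r).
  { pose proof (dist_ge0 y r).
    destruct (Rle_lt_dec (rho y r) 0); [exfalso; apply Hry, eq_sym, dist_eq0; lra | assumption]. }
  pose proof (Oplus_chain_dist _ Htau _ _ _ Hxy (Hr y)).
  exists (rho y r). split; [exact Hpos |].
  intros sigma [Hs [r' Hr']] Hd.
  pose proof (Hd_lt_root_defect _ _ _ _ _ _ Hs Hr' Hd (Hr x)).
  pose proof (dist_sym r y).
  assert (Hsxy : sigma x y).
  { apply (Oplus_between _ Hs _ _ r' (Hr' x) (Hr' y)).
    pose proof (dist_triangle x y r'). pose proof (dist_triangle y r r').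
    destruct (Oplus_gromov_ultrametric _ Hs _ Hr' x r y); lra. }
  split; [exact Hs | split; [exact Hsxy |]].
  intros Hso.
  assert (Ey : y = r').
  { apply (Oplus_antisym _ Hs); [apply Hr' |].
    apply (proj1 (root_order_iff_greatest _ _ Hs) Hso). }
  subst r'. lra.
Qed.

Lemma in_B_Hd_nbhd (U : order X -> Prop) tau :
  in_B rho U -> in_Oplus_r rho tau -> U tau ->
  exists eps, 0 < eps /\
    forall sigma, in_Oplus_r rho sigma -> Hd_lt rho tau sigma eps -> U sigma.
Proof.
  intros [[_ Hopen] | (x & y & _ & EU)] Htau HU.
  - exact (Hopen tau HU).
  - apply EU in HU.
    destruct (U_xy_Hd_nbhd _ _ _ Htau HU) as [eps [Heps Hnbhd]].
    exists eps. split; [exact Heps |].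
    intros sigma Hs Hd. apply EU, Hnbhd; assumption.
Qed.

Lemma Hd_open_rooted_inter (U1 U2 : order X -> Prop) :
  in_B rho U1 -> in_B rho U2 ->
  Hd_open rho (fun sigma => in_Oplus_r rho sigma /\ U1 sigma /\ U2 sigma).
Proof.
  intros HB1 HB2. split; [tauto |].
  intros tau (Htau & H1 & H2).
  destruct (in_B_Hd_nbhd _ _ HB1 Htau H1) as [e1 [He1 N1]].
  destruct (in_B_Hd_nbhd _ _ HB2 Htau H2) as [e2 [He2 N2]].
  exists (Rmin e1 e2). split; [apply Rmin_glb_lt; assumption |].
  intros sigma Hs Hd. split; [exact Hs | split].
  - apply N1, (Hd_lt_weaken _ _ _ _ (Rmin_l e1 e2)); assumption.
  - apply N2, (Hd_lt_weaken _ _ _ _ (Rmin_r e1 e2)); assumption.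
Qed.

Lemma in_B_unrooted (U : order X -> Prop) tau :
  in_B rho U -> U tau -> ~ in_Oplus_r rho tau ->
  exists x y, x <> y /\ forall sigma, U sigma <-> U_xy rho x y sigma.
Proof.
  intros [[Hrooted _] | HU] Htau Hnr; [exfalso; exact (Hnr (Hrooted tau Htau)) | exact HU].
Qed.

Lemma U_xy_subset tau a b w v :
  in_Oplus rho tau -> tau a b -> tau b w -> tau w v -> w <> v ->
  forall sigma, U_xy rho w v sigma -> U_xy rho a b sigma.
Proof.
  intros Htau Hab Hbw Hwv Hne sigma (Hs & Hswv & _).
  assert (Hbelow : forall p, tau p w -> sigma p w).
  { intros p Hpw. apply (Oplus_below_of_between _ Hs p w v Hswv Hne).
    apply (Oplus_chain_dist _ Htau _ _ _ Hpw Hwv). }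
  assert (Hsbw : sigma b w) by (apply Hbelow, Hbw).
  split; [exact Hs | split].
  - apply (Oplus_between _ Hs a b w); [apply Hbelow, (Oplus_trans _ Htau _ _ _ Hab Hbw) | exact Hsbw |].
    exact (Oplus_chain_dist _ Htau _ _ _ Hab Hbw).
  - intros Hso.
    assert (Hvb : sigma v b) by exact (proj1 (root_order_iff_greatest _ b Hs) Hso v).
    assert (Ebv : b = v)
      by (apply (Oplus_antisym _ Hs); [exact (Oplus_trans _ Hs _ _ _ Hsbw Hswv) | exact Hvb]).
    subst b. apply Hne, (Oplus_antisym _ Hs); assumption.
Qed.

Lemma U_xy_refine_unrooted tau x1 y1 x2 y2 :
  ~ in_Oplus_r rho tau -> U_xy rho x1 y1 tau -> U_xy rho x2 y2 tau ->
  exists w v, w <> v /\ U_xy rho w v tau /\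
    forall sigma, U_xy rho w v sigma -> U_xy rho x1 y1 sigma /\ U_xy rho x2 y2 sigma.
Proof.
  intros Hnr (Htau & Hxy1 & _) (_ & Hxy2 & _).
  destruct (Oplus_sup _ Htau y1 y2) as [w (Hw1 & Hw2 & _)].
  destruct (not_all_ex_not _ (fun z => tau z w)) as [z Hz].
  { intros Hall. apply Hnr. split; [exact Htau | exists w; exact Hall]. }
  destruct (Oplus_sup _ Htau w z) as [v (Hwv & Hzv & _)].
  assert (Hne : w <> v) by (intros <-; exact (Hz Hzv)).
  exists w, v. split; [exact Hne | split].
  - split; [exact Htau | split; [exact Hwv |]].
    intros Hso. apply Hnr. split; [exact Htau |].
    exists v. apply (root_order_iff_greatest _ _ Htau), Hso.
  - intros sigma Hs. split; eapply U_xy_subset; eassumption.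
Qed.

End RtreeOrders.

Theorem lemma2 (X : Type) (rho : X -> X -> R)
  (Hmetric : is_metric rho) (Htree : is_Rtree rho)
  (Hcomplete : complete rho) (Hlc : locally_compact rho)
  (U1 U2 : order X -> Prop) :
  in_B rho U1 -> in_B rho U2 ->
  forall tau : order X, U1 tau -> U2 tau ->
  exists U : order X -> Prop,
    in_B rho U /\ U tau /\ (forall sigma, U sigma -> U1 sigma /\ U2 sigma).
Proof.
  intros HB1 HB2 tau H1 H2.
  destruct (classic (in_Oplus_r rho tau)) as [Hrooted | Hunrooted].
  - exists (fun sigma => in_Oplus_r rho sigma /\ U1 sigma /\ U2 sigma).
    split; [left; apply Hd_open_rooted_inter; assumption | tauto].
  - destruct (in_B_unrooted _ _ _ _ HB1 H1 Hunrooted) as (x1 & y1 & _ & E1).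
    destruct (in_B_unrooted _ _ _ _ HB2 H2 Hunrooted) as (x2 & y2 & _ & E2).
    destruct (U_xy_refine_unrooted _ _ Hmetric Htree tau x1 y1 x2 y2 Hunrooted
                (proj1 (E1 tau) H1) (proj1 (E2 tau) H2)) as (w & v & Hne & Hwv & Hsub).
    exists (U_xy rho w v).
    split; [right; exists w, v; split; [exact Hne | tauto] | split; [exact Hwv |]].
    intros sigma Hs. destruct (Hsub sigma Hs).
    split; [apply E1 | apply E2]; assumption.
Qed.
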